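(* For every $\alpha\in[0,2]$, \[ \max_{\mathbf z\in\mathcal Z} G_\alpha(\mathbf z)\;=\;\max_{\mathbf x\in\mathcal X}G_\alpha(\mathbf x), \] i.e. the integrality gap $f^{\mathrm{SU}}(\mathbf z^* )/f^{\mathrm{RSU}}(\mathbf x^* )$ between the SSA problem with uniform allocation and its relaxation equals $1$, where $G_\alpha$ is defined below.
   Context: $\mathcal U$ (users) and $\mathcal B$ (stations) are finite nonempty sets with positive rates $r_{ub}$. $\mathcal Z=\{\mathbf z\in\mathbb Z_+^{|\mathcal U|\times|\mathcal B|}:\sum_b z_{ub}=1\ \forall u\}$ and $\mathcal X=\{\mathbf x\in\mathbb R_+^{|\mathcal U|\times|\mathcal B|}:\sum_b x_{ub}=1\ \forall u\}$. For $\mathbf w\in\mathcal X$ define $G_0(\mathbf w)=\sum_{u,b} r_{ub}w_{ub}\big(1+\sum_{v\ne u}w_{vb}\big)^{-1}$; $G_1(\mathbf w)=\sum_{u,b} w_{ub}\big(\log r_{ub}-\log(1+\sum_{v\ne u} w_{vb})\big)$; for $\alpha>0,\alpha\ne1$: $G_\alpha(\mathbf w)=\frac{1}{1-\alpha}\sum_{u,b} r_{ub}^{1-\alpha}w_{ub}\big(1+\sum_{v\ne u}w_{vb}\big)^{\alpha-1}$. $f^{\mathrm{SU}}=\max_{\mathbf z\in\mathcal Z}G_\alpha(\mathbf z)$ is the single-station association problem in which each station shares its resource uniformly among its associated users and the objective is the sum of $\alpha$-fair utilities ($U_\alpha(R)=R^{1-\alpha}/(1-\alpha)$, $U_1=\log$)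 of user rates; $f^{\mathrm{RSU}}=\max_{\mathbf x\in\mathcal X}G_\alpha(\mathbf x)$ is its relaxation; $\mathbf z^*,\mathbf x^*$ denote their optimizers. *)

From HB Require Import structures.
From mathcomp Require Import all_boot all_order all_algebra.
From mathcomp Require Import reals exp.
Set Implicit Arguments. Unset Strict Implicit. Unset Printing Implicit Defensive.
Import Order.TTheory GRing.Theory Num.Theory.
Local Open Scope ring_scope.

Section Defs.
Variables (R : realType) (U B : finType).

Definition others (w : U -> B -> R) (u : U) (b : B) : R :=
  \sum_(v : U | v != u) w v b.

Definition in_X (w : U -> B -> R) : Prop :=
  (forall u b, 0 <= w u b) /\ (forall u, \sum_(b : B) w u b = 1).

Definition in_Z (w : U -> B -> R) : Prop :=
  (forall u b, w u b \is a Num.nat) /\ (forall u, \sum_(b : B) w u b = 1).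

Definition G0 (r : U -> B -> R) (w : U -> B -> R) : R :=
  \sum_(u : U) \sum_(b : B) r u b * w u b / (1 + others w u b).

Definition G1 (r : U -> B -> R) (w : U -> B -> R) : R :=
  \sum_(u : U) \sum_(b : B) w u b * (ln (r u b) - ln (1 + others w u b)).

Definition Galpha_gen (alpha : R) (r : U -> B -> R) (w : U -> B -> R) : R :=
  (1 - alpha)^-1 * \sum_(u : U) \sum_(b : B)
     powR (r u b) (1 - alpha) * w u b * powR (1 + others w u b) (alpha - 1).

Definition G (alpha : R) (r : U -> B -> R) (w : U -> B -> R) : R :=
  if alpha == 0 then G0 r w
  else if alpha == 1 then G1 r w
  else Galpha_gen alpha r w.

Definition is_argmax (S : (U -> B -> R) -> Prop) (f : (U -> B -> R) -> R)
    (w : U -> B -> R) : Prop :=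
  S w /\ forall w', S w' -> f w' <= f w.

End Defs.

From HB Require Import structures.
From mathcomp Require Import all_boot all_order all_algebra.
From mathcomp Require Import reals exp.
From mathcomp Require Import boolp interval_inference convex hoelder.
From mathcomp Require Import ring lra.
Import Order.TTheory GRing.Theory Num.Theory.
Local Open Scope ring_scope.

(* Write [G_alpha w] as [sum_(u,b) w_ub * phi_ub (1 + sum_(v != u) w_vb)] with
   [phi_ub y = U_alpha (r_ub / y)].  For [alpha] in [0, 2] every [phi_ub] lies
   below its chord on each interval [y, y + 1], [y > 0].  Freezing all rows but
   the row of user [u], [G_alpha] becomes a sum over stations [b] of functions of
   [w_ub] lying below their chords on [0, 1], so it is maximised on the simplex
   at a vertex.  Rounding the rows one at a time thus never decreases [G_alpha]:
   every fractional association is dominated by an integral one. *)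

Section UnitChordConvex.
Context {R : realType}.
Implicit Types (f : R -> R) (y t : R).

Definition unit_chord_convex f := forall y t, 0 < y -> 0 <= t -> t <= 1 ->
  f (y + t) <= (1 - t) * f y + t * f (y + 1).

Lemma unit_chord_convexZ (k : R) f : 0 <= k ->
  unit_chord_convex f -> unit_chord_convex (fun y => k * f y).
Proof.
move=> k0 f_cvx y t y0 t0 t1.
have := ler_wpM2l k0 (f_cvx y t y0 t0 t1); lra.
Qed.

Lemma unit_chord_convexDl (c : R) f :
  unit_chord_convex f -> unit_chord_convex (fun y => c + f y).
Proof. move=> f_cvx y t y0 t0 t1; have := f_cvx y t y0 t0 t1; lra. Qed.

Lemma unit_chord_convex_inv : unit_chord_convex (fun y => y^-1).
Proof.
move=> y t y0 t0 t1; rewrite -subr_ge0.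
have -> : (1 - t) * y^-1 + t * (y + 1)^-1 - (y + t)^-1 =
    t * (1 - t) / (y * (y + 1) * (y + t)).
  by field; apply/and3P; split; apply/eqP; lra.
by apply: divr_ge0; [apply: mulr_ge0 | apply: mulr_ge0; [apply: mulr_ge0|]]; lra.
Qed.

Lemma ln_chord_le {y t} : 0 < y -> 0 <= t -> t <= 1 ->
  (1 - t) * ln y + t * ln (y + 1) <= ln (y + t).
Proof.
move=> y0 t0 t1; have := @concave_ln R (Itv01 t0 t1) (y + 1) y ltac:(lra) y0.
rewrite !convRE /= -/(1 - t) (_ : t * (y + 1) + (1 - t) * y = y + t); last by ring.
by rewrite addrC.
Qed.

Lemma unit_chord_convex_oppln : unit_chord_convex (fun y => - ln y).
Proof. by move=> y t y0 t0 t1; have := ln_chord_le y0 t0 t1; lra. Qed.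

Lemma unit_chord_convex_powR_le0 (p : R) : p <= 0 ->
  unit_chord_convex (fun y => powR y p).
Proof.
move=> p0 y t y0 t0 t1; rewrite /powR !gt_eqF; [|lra|lra|lra].
have := @convex_expR R (Itv01 t0 t1) (p * ln (y + 1)) (p * ln y).
rewrite !convRE /= addrC [X in _ <= X -> _]addrC; apply: le_trans.
rewrite ler_expR (_ : (1 - t) * (p * ln y) + t * (p * ln (y + 1)) =
  p * ((1 - t) * ln y + t * ln (y + 1))); last by ring.
exact/ler_wnM2l/ln_chord_le.
Qed.

(* Concavity of [y ^ p] for [0 < p <= 1] is read off the convexity of its
   inverse [y ^ (1/p)]. *)
Lemma unit_chord_convex_opp_powR (p : R) : 0 < p -> p <= 1 ->
  unit_chord_convex (fun y => - powR y p).
Proof.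
move=> p0 p1 y t y0 t0 t1.
set u := powR y p; set v := powR (y + 1) p.
have powRK z : 0 <= z -> powR (powR z p) p^-1 = z.
  by move=> z0; rewrite -powRrM mulfV ?gt_eqF // powRr1.
have u0 : u \in `[0, +oo[ by rewrite in_itv /= andbT powR_ge0.
have v0 : v \in `[0, +oo[ by rewrite in_itv /= andbT powR_ge0.
have cvx : powR (t * v + (1 - t) * u) p^-1 <=
    t * powR v p^-1 + (1 - t) * powR u p^-1.
  exact: (convex_powR (eqbRL (invf_ge1 p0) p1) (Itv01 t0 t1)
    (classical_sets.mem_set v0) (classical_sets.mem_set u0)).
rewrite !powRK in cvx; [|lra|lra].
have uv0 : 0 <= t * v + (1 - t) * u.
  by apply: addr_ge0; apply: mulr_ge0; rewrite ?powR_ge0 //; lra.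
have := ge0_ler_powR (ltW p0) _ _ cvx.
rewrite -powRrM mulVf ?gt_eqF // powRr1 // => le_powR.
suff : t * v + (1 - t) * u <= powR (y + t) p by lra.
rewrite (_ : y + t = t * (y + 1) + (1 - t) * y); last by ring.
apply: le_powR; rewrite nnegrE ?powR_ge0 //.
by apply: addr_ge0; apply: mulr_ge0; lra.
Qed.

End UnitChordConvex.

Section Rounding.
Context {R : realType} {U B : finType}.
Implicit Types (phi : U -> B -> R -> R) (x : U -> B -> R) (y : B -> R).

Definition unit_row (b : B) : B -> R := fun b' => (b' == b)%:R.

Definition set_row x (u0 : U) y : U -> B -> R :=
  fun u => if u == u0 then y else x u.

Lemma sum_unit_row b : \sum_b' unit_row b b' = 1.
Proof. by rewrite (bigD1 b) //= /unit_row eqxx big1 ?addr0 // => b' /negbTE ->. Qed.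

Lemma sum_unit_rowM b (f : B -> R) : \sum_b' unit_row b b' * f b' = f b.
Proof.
rewrite (bigD1 b) //= /unit_row eqxx mul1r big1 ?addr0 // => b' /negbTE ->.
by rewrite mul0r.
Qed.

Lemma set_row_id x u0 : set_row x u0 (x u0) = x.
Proof. by apply/funext => u; rewrite /set_row; case: eqP => [->|]. Qed.

Lemma simplex_le1 {y} b : (forall b', 0 <= y b') -> \sum_b' y b' = 1 -> y b <= 1.
Proof.
move=> y0 /esym; rewrite (bigD1 b) //=.
have rest_ge0 : 0 <= \sum_(b' | b' != b) y b' by apply: sumr_ge0.
lra.
Qed.

(* The maximising vertex is the one with the largest gain [g b 1 - g b 0]. *)
Lemma simplex_vertex_ge (g : B -> R -> R) y :
  (forall b s, 0 <= s -> s <= 1 -> g b s <= (1 - s) * g b 0 + s * g b 1) ->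
  (forall b, 0 <= y b) -> \sum_b y b = 1 ->
  exists bs, \sum_b g b (y b) <= \sum_b g b (unit_row bs b).
Proof.
move=> g_chord y0 y1.
have [b0 _] : exists b0 : B, true.
  case: (pickP (fun _ : B => true)) => [b0 _|none]; first by exists b0.
  by move: y1; rewrite big1 => [/eqP|b]; [rewrite eq_sym oner_eq0 | have := none b].
pose d b := g b 1 - g b 0.
have [bs _ d_max] := @arg_maxP _ _ B b0 xpredT d isT.
exists bs.
have vertexE b : g b (unit_row bs b) = g b 0 + unit_row bs b * d b.
  by rewrite /unit_row /d; case: eqP => _ /=; ring.
rewrite (eq_bigr _ (fun b _ => vertexE b)) big_split /= sum_unit_rowM.
apply: le_trans (_ : _ <= \sum_b (g b 0 + y b * d bs)) _.
  apply: ler_sum => b _; apply: le_trans (g_chord b _ (y0 b) (simplex_le1 b y0 y1)) _.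
  have := ler_wpM2l (y0 b) (d_max b isT); rewrite /d; lra.
by rewrite big_split /= -mulr_suml y1 mul1r.
Qed.

Lemma in_X_set_row x u0 b : in_X x -> in_X (set_row x u0 (unit_row b)).
Proof.
by case=> x0 x1; split=> u; rewrite /set_row; case: eqP => _ //; rewrite sum_unit_row.
Qed.

Lemma in_Z_in_X x : in_Z x -> in_X x.
Proof. by case=> xn x1; split=> // u b; apply: natr_ge0. Qed.

Lemma nat_simplex_unit_row y : (forall b, y b \is a Num.nat) ->
  \sum_b y b = 1 -> exists b, y = unit_row b.
Proof.
move=> yn y1.
have [b yb0] : exists b, y b != 0.
  case: (pickP (fun b => y b != 0)) => [b yb0|y0]; first by exists b.
  move: y1; rewrite big1 => [/eqP|b _]; first by rewrite eq_sym oner_eq0.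
  exact/eqP/negbFE/y0.
have y0 b' : 0 <= y b' by apply: natr_ge0.
have yb1 : 1 <= y b.
  by have [n yn_b] := natrP (yn b); move: yb0; rewrite yn_b ler1n lt0n pnatr_eq0.
move: y1; rewrite (bigD1 b) //= => y1.
have rest_ge0 : 0 <= \sum_(b' | b' != b) y b' by apply: sumr_ge0.
have rest0 : \sum_(b' | b' != b) y b' = 0 by lra.
exists b; apply/funext => b'; rewrite /unit_row.
have [->|b'b] := eqVneq b' b => /=; first by lra.
by move/psumr_eq0P: rest0 => ->.
Qed.

Lemma in_Z_unit_rowsP x : in_Z x <-> forall u, exists b, x u = unit_row b.
Proof.
split=> [[xn x1] u | x_unit]; first exact: nat_simplex_unit_row.
split=> u; have [b ->] := x_unit u; last exact: sum_unit_row.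
by move=> b'; rewrite /unit_row natr_nat.
Qed.

Lemma in_Z_has_argmax (F : (U -> B -> R) -> R) (b0 : B) :
  exists z, is_argmax (@in_Z R U B) F z.
Proof.
pose unit_rows (f : {ffun U -> B}) u := unit_row (f u).
have [f _ f_max] := @arg_maxP _ _ _ [ffun=> b0] xpredT (F \o unit_rows) isT.
exists (unit_rows f); split=> [|z /in_Z_unit_rowsP /fin_all_exists [g zE]].
  by apply/in_Z_unit_rowsP => u; exists (f u).
have -> : z = unit_rows [ffun u => g u] by apply/funext => u; rewrite zE /unit_rows ffunE.
exact: f_max.
Qed.

Lemma argmax_of_rounding (F : (U -> B -> R) -> R) :
  (forall x, in_X x -> exists z, in_Z z /\ F x <= F z) ->
  (exists z, is_argmax (@in_Z R U B) F z) ->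
  (exists x, is_argmax (@in_X R U B) F x) /\
  (forall z x, is_argmax (@in_Z R U B) F z -> is_argmax (@in_X R U B) F x ->
     F z = F x).
Proof.
move=> round [z0 [z0Z z0_max]]; split.
  exists z0; split=> [|x /round [z [zZ le_xz]]]; first exact: in_Z_in_X.
  exact: le_trans le_xz (z0_max z zZ).
move=> z x [zZ z_max] [xX x_max]; apply/eqP; rewrite eq_le x_max /=; last exact: in_Z_in_X.
by have [z' [z'Z le_xz']] := round x xX; apply: le_trans le_xz' (z_max z' z'Z).
Qed.

Definition weighted_utility phi x : R :=
  \sum_u \sum_b x u b * phi u b (1 + others x u b).

Definition others_but x (u0 u : U) (b : B) : R :=
  \sum_(v | (v != u) && (v != u0)) x v b.

Definition row_gain phi x u0 (b : B) (s : R) : R :=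
  s * phi u0 b (1 + others x u0 b) +
  \sum_(u | u != u0) x u b * phi u b (1 + others_but x u0 u b + s).

Lemma others_set_row_self x u0 y b : others (set_row x u0 y) u0 b = others x u0 b.
Proof. by apply: eq_bigr => v /negbTE; rewrite /set_row => ->. Qed.

Lemma others_set_row x u0 y u b : u != u0 ->
  others (set_row x u0 y) u b = y b + others_but x u0 u b.
Proof.
move=> uu0; rewrite /others (bigD1 u0) 1?eq_sym //= /set_row eqxx.
by congr (_ + _); apply: eq_bigr => v /andP[_ /negbTE ->].
Qed.

Lemma weighted_utility_set_row phi x u0 y :
  weighted_utility phi (set_row x u0 y) = \sum_b row_gain phi x u0 b (y b).
Proof.
rewrite /weighted_utility exchange_big; apply: eq_bigr => b _.
rewrite (bigD1 u0) //= others_set_row_self {1}/set_row eqxx; congr (_ + _).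
apply: eq_bigr => u uu0; rewrite others_set_row // /set_row (negbTE uu0).
by rewrite [y b + _]addrC addrA.
Qed.

Section ChordConvexUtility.
Variable phi : U -> B -> R -> R.
Hypothesis phi_convex : forall u b, unit_chord_convex (phi u b).

Lemma row_gain_chord x u0 b s : (forall u b, 0 <= x u b) -> 0 <= s -> s <= 1 ->
  row_gain phi x u0 b s <= (1 - s) * row_gain phi x u0 b 0 + s * row_gain phi x u0 b 1.
Proof.
move=> x0 s0 s1; rewrite /row_gain.
suff : \sum_(u | u != u0) x u b * phi u b (1 + others_but x u0 u b + s) <=
    \sum_(u | u != u0) ((1 - s) * (x u b * phi u b (1 + others_but x u0 u b + 0)) +
                        s * (x u b * phi u b (1 + others_but x u0 u b + 1))).
  by rewrite big_split /= -!mulr_sumr; lra.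
apply: ler_sum => u _.
have others0 : 0 < 1 + others_but x u0 u b by rewrite ltr_wpDr ?sumr_ge0.
have := ler_wpM2l (x0 u b) (phi_convex u b _ _ others0 s0 s1).
by rewrite addr0; lra.
Qed.

Lemma round_row {x} u0 : in_X x ->
  exists bs, weighted_utility phi x <=
             weighted_utility phi (set_row x u0 (unit_row bs)).
Proof.
case=> x0 x1.
have [bs le_vertex] := simplex_vertex_ge _ _
  (fun b s => @row_gain_chord x u0 b s x0) (x0 u0) (x1 u0).
by exists bs; rewrite -{1}(set_row_id x u0) !weighted_utility_set_row.
Qed.

Lemma round_rows (s : seq U) x : in_X x ->
  exists x', [/\ in_X x', weighted_utility phi x <= weighted_utility phi x' &
                forall u, u \in s -> exists b, x' u = unit_row b].
Proof.
elim: s x => [|u0 s IHs] x xX; first by exists x; split.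
have [x1 [x1X le_x1 x1_unit]] := IHs x xX.
have [b0 le_round] := round_row u0 x1X.
exists (set_row x1 u0 (unit_row b0)); split.
- exact: in_X_set_row.
- exact: le_trans le_x1 le_round.
- move=> u; rewrite inE /set_row; case: eqP => [_ _|_ /= /x1_unit //].
  by exists b0.
Qed.

Lemma round_to_Z x : in_X x ->
  exists z, in_Z z /\ weighted_utility phi x <= weighted_utility phi z.
Proof.
move=> /(round_rows (enum U)) [z [_ le_xz z_unit]].
exists z; split=> //; apply/in_Z_unit_rowsP => u.
by apply: z_unit; rewrite mem_enum.
Qed.

End ChordConvexUtility.

End Rounding.

Section AlphaFair.
Context {R : realType} {U B : finType}.

(* [load_utility alpha r u b y] is the alpha-fair utility [U_alpha (r u b / y)]
   of user [u] at station [b] when [y] users share the station. *)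
Definition load_utility (alpha : R) (r : U -> B -> R) (u : U) (b : B) : R -> R :=
  if alpha == 0 then fun y => r u b * y^-1
  else if alpha == 1 then fun y => ln (r u b) + - ln y
  else fun y => (1 - alpha)^-1 * powR (r u b) (1 - alpha) * powR y (alpha - 1).

Lemma G_weighted_utility alpha r :
  G alpha r = weighted_utility (load_utility alpha r).
Proof.
apply/funext => w; rewrite /G /weighted_utility /load_utility.
case: eqP => _; first by apply: eq_bigr => u _; apply: eq_bigr => b _; ring.
case: eqP => _ //; rewrite /Galpha_gen mulr_sumr; apply: eq_bigr => u _.
by rewrite mulr_sumr; apply: eq_bigr => b _; ring.
Qed.

Lemma load_utility_convex alpha r u b : 0 < r u b -> 0 <= alpha -> alpha <= 2 ->
  unit_chord_convex (load_utility alpha r u b).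
Proof.
move=> r0 a0 a2; rewrite /load_utility.
case: eqP => _; first exact/unit_chord_convexZ/unit_chord_convex_inv/ltW.
case: eqP => [_|a1]; first exact/unit_chord_convexDl/unit_chord_convex_oppln.
set k := (1 - alpha)^-1 * powR (r u b) (1 - alpha).
have [a_lt1|a_ge1] := ltrP alpha 1.
  apply: unit_chord_convexZ; last by apply: unit_chord_convex_powR_le0; lra.
  by apply: mulr_ge0; rewrite ?powR_ge0 // invr_ge0; lra.
have a_gt1 : 1 < alpha by rewrite lt_neqAle eq_sym a_ge1 andbT; apply/eqP.
have -> : (fun y => k * powR y (alpha - 1)) = fun y => - k * - powR y (alpha - 1).
  by apply/funext => y; rewrite mulrNN.
apply: unit_chord_convexZ; last by apply: unit_chord_convex_opp_powR; lra.
by rewrite oppr_ge0; apply: mulr_le0_ge0; rewrite ?powR_ge0 // invr_le0; lra.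
Qed.

End AlphaFair.

Theorem theorem2 (R : realType) (U B : finType)
    (HU : (0 < #|U|)%N) (HB : (0 < #|B|)%N)
    (r : U -> B -> R) (Hr : forall u b, 0 < r u b)
    (alpha : R) (Ha0 : 0 <= alpha) (Ha2 : alpha <= 2) :
  (exists z, is_argmax (@in_Z R U B) (G alpha r) z) /\
  (exists x, is_argmax (@in_X R U B) (G alpha r) x) /\
  (forall z x, is_argmax (@in_Z R U B) (G alpha r) z ->
               is_argmax (@in_X R U B) (G alpha r) x ->
               G alpha r z = G alpha r x).
Proof.
have [b0 _] := card_gt0P HB.
have Z_argmax := in_Z_has_argmax (G alpha r) b0.
split=> //; apply: argmax_of_rounding Z_argmax.
rewrite G_weighted_utility; apply: round_to_Z => u b.
exact: load_utility_convex.
Qed.
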